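(* Let $n>p>1$ with $p\in(1,2]$, let $f,k$ be $C^1$ functions satisfying: (F) $f(u)=u|u|^{q-2}b(u)$ with $q>2$, $b\in C^1(\mathbb R)$, $b>0$ on $(-d^-,d^+)$ for some $d^\pm>0$, $b(-d^-)=b(d^+)=0$; (K) $k(r)=h(r)r^\delta>0$ on $(0,\infty)$ with $h>0$, $\delta>-p$, $\lim_{r\to0}h(r)\in(0,\infty)$, $\lim_{r\to\infty}h(r)\in(0,\infty)$, $\limsup_{r\to0}h'(r)r<+\infty$, $\lim_{r\to\infty}h'(r)r^{1+\varpi}=0$ for some $\varpi>0$. Let $l:=p\frac{q+\delta}{p+\delta}>\frac{np}{n-p}$, $\alpha_l=\frac{p}{l-p}$, $\beta_l=(\alpha_l+1)(p-1)$, $\gamma_l=\beta_l-(n-1)$. Let $\bar f$ be a $C^1$ function with $\bar f=f$ on $(-d^-,d^+)$, $\bar f=0$ on $(-\infty,-d^--1)\cup(d^++1,+\infty)$, and $u\bar f(u)\le0$ elsewhere, and set $g_l(x,t)=k(e^t)\bar f(xe^{-\alpha_lt})e^{\alpha_l(l-1)t}$. Consider the system $$\dot x_l=\alpha_lx_l+y_l|y_l|^{\frac{2-p}{p-1}},\qquad \dot y_l=\gamma_ly_l-g_l(x_l,t),$$ and denote by $(x_l(t,\sigma,\mathbf Q),y_l(t,\sigma,\mathbf Q))$ its solution taking the value $\mathbf Q$ at $t=\sigma$. Let $\mathbf Q=(Q_x,Q_y)\in\mathbb R^2$ and $\sigma\in\mathbb R$ with $-d^-<Q_xe^{-\alpha_l\sigma}<d^+$.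 Suppose there exists $\sigma'>\sigma$ such that $-d^-<x_l(\sigma',\sigma,\mathbf Q)e^{-\alpha_l\sigma'}<d^+$. Then $-d^-<x_l(t,\sigma,\mathbf Q)e^{-\alpha_lt}<d^+$ for every $t\in(\sigma,\sigma')$. *)

From Stdlib Require Import Reals Lra.
From Coquelicot Require Import Coquelicot.
Open Scope R_scope.

Definition spow (u a : R) : R :=
  if Req_EM_T u 0 then 0 else u * Rpower (Rabs u) a.

Definition is_C1 (f : R -> R) : Prop :=
  (forall x, ex_derive f x) /\ (forall x, continuous (Derive f) x).

Definition is_C1_pos (f : R -> R) : Prop :=
  (forall x, 0 < x -> ex_derive f x) /\ (forall x, 0 < x -> continuous (Derive f) x).

Definition l_exp (p q delta : R) : R := p * (q + delta) / (p + delta).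
Definition alpha_l (l p : R) : R := p / (l - p).
Definition beta_l (l p : R) : R := (alpha_l l p + 1) * (p - 1).
Definition gamma_l (n : nat) (l p : R) : R := beta_l l p - (INR n - 1).

Definition g_l (k fbar : R -> R) (l p : R) (x t : R) : R :=
  k (exp t) * fbar (x * exp (- alpha_l l p * t)) * exp (alpha_l l p * (l - 1) * t).

(* With X(t) = x(t) e^{-alpha t} the system becomes X' = y |y|^a e^{-alpha t},
   y' = gamma y - K(t) fbar(X) with a = (2-p)/(p-1) >= 0 and K > 0, where fbar <= 0
   on [d^+, oo) and fbar >= 0 on (-oo, -d^-]. If X reached d^+ strictly between
   sigma and sigma', then at an interior maximum X' = 0, hence y = 0; from there the
   region {X >= d^+, y >= 0} is forward invariant, because the energy
   (d^+ - X)_+^2 + (-y)_+^2 vanishes there and satisfies a linear Gronwall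
   inequality (fbar is locally Lipschitz, and y |y|^a is dominated by |y| on bounded
   sets). This contradicts X(sigma') < d^+. The lower barrier -d^- is symmetric. *)

From Stdlib Require Import Reals Lra.
From Coquelicot Require Import Coquelicot.
Open Scope R_scope.

Definition pos_part (z : R) : R := Rmax z 0.

Lemma pos_part_ge0 z : 0 <= pos_part z.
Proof. apply Rmax_r. Qed.

Lemma pos_part_id z : 0 <= z -> pos_part z = z.
Proof. apply Rmax_left. Qed.

Lemma pos_part_eq0 z : z <= 0 -> pos_part z = 0.
Proof. apply Rmax_right. Qed.

Lemma pos_part_mul z : pos_part z * z = pos_part z ^ 2.
Proof. unfold pos_part, Rmax; destruct (Rle_dec z 0); ring. Qed.

Lemma pos_part_sq_expansion x h :
  Rabs (pos_part (x + h) ^ 2 - pos_part x ^ 2 - 2 * pos_part x * h) <= h ^ 2.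
Proof.
  unfold pos_part, Rmax.
  destruct (Rle_dec (x + h) 0), (Rle_dec x 0); apply Rabs_le; split; nra.
Qed.

Lemma is_derive_pos_part_sq x :
  is_derive (fun z => pos_part z ^ 2) x (2 * pos_part x).
Proof.
  apply is_derive_Reals; intros eps Heps.
  exists (mkposreal eps Heps); intros h Hh0 Hh; simpl in Hh.
  assert (Hh' : 0 < Rabs h) by (apply Rabs_pos_lt; exact Hh0).
  replace ((pos_part (x + h) ^ 2 - pos_part x ^ 2) / h - 2 * pos_part x)
    with ((pos_part (x + h) ^ 2 - pos_part x ^ 2 - 2 * pos_part x * h) / h)
    by (field; exact Hh0).
  rewrite Rabs_div by exact Hh0.
  apply Rle_lt_trans with (h ^ 2 / Rabs h).
  - apply Rmult_le_compat_r; [left; apply Rinv_0_lt_compat, Hh'|].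
    apply pos_part_sq_expansion.
  - replace (h ^ 2) with (Rabs h * Rabs h) by (rewrite <- Rabs_mult, Rabs_pos_eq; nra).
    field_simplify; lra.
Qed.

Lemma is_derive_pos_part_sq_comp (f : R -> R) x df :
  is_derive f x df -> is_derive (fun t => pos_part (f t) ^ 2) x (2 * pos_part (f x) * df).
Proof.
  intro Hf.
  apply is_derive_ext with (f := fun t => (fun z => pos_part z ^ 2) (f t)); [reflexivity|].
  replace (2 * pos_part (f x) * df) with (df * (2 * pos_part (f x))) by ring.
  exact (is_derive_comp _ f x _ _ (is_derive_pos_part_sq (f x)) Hf).
Qed.

Lemma is_derive_continuity_pt (f : R -> R) x l : is_derive f x l -> continuity_pt f x.
Proof.
  intro Hf; apply continuity_pt_filterlim.
  apply (ex_derive_continuous (V := R_NormedModule)); exists l; exact Hf.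
Qed.

Lemma continuous_bounded_segment (f : R -> R) s0 s1 :
  (forall t, s0 <= t <= s1 -> continuity_pt f t) ->
  exists M, forall t, s0 <= t <= s1 -> Rabs (f t) <= M.
Proof.
  intro Hf.
  destruct (bounded_continuity f s0 s1) as [M HM].
  - intros t Ht; apply continuity_pt_filterlim, Hf, Ht.
  - exists M; intros t Ht; left; exact (HM t Ht).
Qed.

Lemma derive_nonpos_le (F dF : R -> R) s0 s1 : s0 <= s1 ->
  (forall t, s0 <= t <= s1 -> is_derive F t (dF t) /\ dF t <= 0) -> F s1 <= F s0.
Proof.
  intros Hs HF.
  destruct (MVT_gen F s0 s1 dF) as [t [Ht Heq]];
    rewrite ?Rmin_left, ?Rmax_right in * by lra.
  - intros t Ht; apply HF; lra.
  - intros t Ht; apply (is_derive_continuity_pt _ _ (dF t)), HF, Ht.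
  - destruct (HF t Ht) as [_ Hneg]; nra.
Qed.

Lemma energy_rate_le (P Q v w G B Lg g : R) :
  0 <= P -> 0 <= Q -> 0 <= B -> 0 <= Lg -> Q * (- w) = Q ^ 2 ->
  - v <= B * Q -> G <= Lg * P ->
  2 * P * (- v) + 2 * Q * (- (g * w - G)) <= (B + Lg + 2 * Rabs g) * (P ^ 2 + Q ^ 2).
Proof.
  intros HP HQ HB HLg Hw Hv HG.
  assert (HPQ : 2 * P * Q <= P ^ 2 + Q ^ 2) by (pose proof (pow2_ge_0 (P - Q)); lra).
  assert (Hgw : 2 * Q * (- (g * w)) <= 2 * Rabs g * Q ^ 2).
  { replace (2 * Q * (- (g * w))) with (2 * g * (Q * (- w))) by ring.
    rewrite Hw; pose proof (Rle_abs g); pose proof (pow2_ge_0 Q); nra. }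
  assert (2 * P * (- v) <= B * (2 * P * Q)) by nra.
  assert (2 * Q * G <= Lg * (2 * P * Q)) by nra.
  pose proof (pow2_ge_0 P); pose proof (Rabs_pos g); nra.
Qed.

Section LevelCrossing.

Variables (X y V G : R -> R) (g B Lg c s0 s1 : R).
Hypotheses (HB : 0 <= B) (HLg : 0 <= Lg).
Hypothesis Hsys : forall t, s0 <= t <= s1 ->
  is_derive X t (V t) /\ is_derive y t (g * y t - G t).
Hypothesis HV : forall t, s0 <= t <= s1 -> - V t <= B * pos_part (- y t).
Hypothesis HG : forall t, s0 <= t <= s1 -> G t <= Lg * pos_part (c - X t).

Lemma superlevel_forward_invariant u0 u1 : s0 <= u0 <= u1 -> u1 <= s1 ->
  c <= X u0 -> 0 <= y u0 -> c <= X u1.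
Proof.
  intros Hu Hu1 HX0 Hy0.
  set (C := B + Lg + 2 * Rabs g).
  set (En := fun t => pos_part (c - X t) ^ 2 + pos_part (- y t) ^ 2).
  set (dEn := fun t => 2 * pos_part (c - X t) * (- V t)
                       + 2 * pos_part (- y t) * (- (g * y t - G t))).
  assert (Hdecay : En u1 * exp (- C * u1) <= En u0 * exp (- C * u0)).
  { apply (derive_nonpos_le (fun t => En t * exp (- C * t))
                            (fun t => (dEn t - C * En t) * exp (- C * t))); [lra|].
    intros t Ht; assert (Ht' : s0 <= t <= s1) by lra.
    destruct (Hsys t Ht') as [HXt Hyt]; split.
    - replace ((dEn t - C * En t) * exp (- C * t))
        with (dEn t * exp (- C * t) + En t * (- C * exp (- C * t))) by ring.
      apply (is_derive_mult En (fun t => exp (- C * t))); [| auto_derive; auto; ring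
                                                          | intros; apply Rmult_comm].
      apply (is_derive_plus (fun t => pos_part (c - X t) ^ 2) (fun t => pos_part (- y t) ^ 2)).
      + apply (is_derive_pos_part_sq_comp (fun t => c - X t)).
        replace (- V t) with (0 - V t) by ring.
        apply (is_derive_minus (fun _ => c) X); [auto_derive; auto | exact HXt].
      + apply (is_derive_pos_part_sq_comp (fun t => - y t)), (is_derive_opp y), Hyt.
    - assert (dEn t <= C * En t).
      { apply energy_rate_le; auto using pos_part_ge0, HV, HG.
        apply pos_part_mul. }
      pose proof (exp_pos (- C * t)); nra. }
  assert (En u0 = 0) by (unfold En; rewrite !pos_part_eq0 by lra; ring).
  destruct (Rle_dec (c - X u1) 0) as [|Hlt]; [lra|].
  assert (0 < En u1).
  { unfold En; rewrite (pos_part_id (c - X u1)) by lra.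
    pose proof (pow2_ge_0 (pos_part (- y u1))); nra. }
  pose proof (exp_pos (- C * u1)); nra.
Qed.

Hypothesis HVy : forall t, s0 <= t <= s1 -> V t = 0 -> y t = 0.

Lemma below_level_between : X s0 < c -> X s1 < c ->
  forall t, s0 < t < s1 -> X t < c.
Proof.
  intros H0 H1 t Ht.
  destruct (Rlt_dec (X t) c) as [|Hct]; [assumption|exfalso].
  destruct (continuity_ab_maj X s0 s1) as [tm [Hmax Htm]]; [lra| |].
  { intros u Hu; apply (is_derive_continuity_pt _ _ (V u)), Hsys, Hu. }
  assert (c <= X tm) by (pose proof (Hmax t ltac:(lra)); lra).
  assert (Htm' : s0 < tm < s1).
  { destruct Htm as [[Hl | <-] [Hr | ->]]; lra. }
  assert (HVtm : V tm = 0).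
  { destruct (Hsys tm Htm) as [HXd _].
    pose (pr := exist (fun l => derivable_pt_lim X tm l) (V tm)
                      (proj1 (is_derive_Reals X tm (V tm)) HXd)).
    apply (deriv_maximum X s0 s1 tm pr); try lra.
    intros u Hu1 Hu2; apply Hmax; lra. }
  assert (c <= X s1).
  { apply (superlevel_forward_invariant tm s1); try lra.
    rewrite (HVy tm Htm HVtm); lra. }
  lra.
Qed.

End LevelCrossing.

Lemma spow_opp u a : spow (- u) a = - spow u a.
Proof.
  unfold spow; destruct (Req_EM_T (- u) 0), (Req_EM_T u 0); try lra.
  rewrite Rabs_Ropp; ring.
Qed.

Lemma spow_eq0 u a : spow u a = 0 -> u = 0.
Proof.
  unfold spow; destruct (Req_EM_T u 0) as [|Hu]; [easy|]; intro H.
  apply Rmult_integral in H as [|H]; [easy|].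
  unfold Rpower in H; pose proof (exp_pos (a * ln (Rabs u))); lra.
Qed.

Lemma opp_spow_le u a M : 0 <= a -> Rabs u <= M ->
  - spow u a <= Rpower M a * pos_part (- u).
Proof.
  intros Ha Hu; unfold spow.
  assert (0 <= Rpower M a * pos_part (- u)).
  { apply Rmult_le_pos; [left; apply exp_pos | apply pos_part_ge0]. }
  destruct (Req_EM_T u 0); [lra|].
  destruct (Rle_dec 0 u).
  - assert (0 < Rpower (Rabs u) a) by apply exp_pos.
    assert (0 <= u * Rpower (Rabs u) a) by (apply Rmult_le_pos; lra).
    lra.
  - rewrite pos_part_id by lra.
    assert (Rpower (Rabs u) a <= Rpower M a).
    { apply Rle_Rpower_l; [exact Ha | split; [apply Rabs_pos_lt|]; assumption]. }
    nra.
Qed.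

Definition locally_lipschitz (F : R -> R) : Prop :=
  forall M, exists L, 0 <= L /\ forall u v, Rabs u <= M -> Rabs v <= M ->
    Rabs (F u - F v) <= L * Rabs (u - v).

Lemma is_C1_locally_lipschitz F : is_C1 F -> locally_lipschitz F.
Proof.
  intros [HF HF'] M.
  destruct (continuous_bounded_segment (Derive F) (- M) M) as [L HL].
  { intros t _; apply continuity_pt_filterlim, HF'. }
  exists (Rabs L); split; [apply Rabs_pos|]; intros u v Hu Hv.
  destruct (MVT_gen F v u (Derive F)) as [w [Hw ->]].
  - intros w _; apply Derive_correct, HF.
  - intros w _; apply (is_derive_continuity_pt _ _ (Derive F w)), Derive_correct, HF.
  - rewrite Rabs_mult; apply Rmult_le_compat_r; [apply Rabs_pos|].
    apply Rabs_le_between in Hu, Hv.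
    assert (Hw' : - M <= w <= M).
    { unfold Rmin, Rmax in Hw; destruct (Rle_dec v u); lra. }
    pose proof (Rle_abs L); pose proof (HL w Hw'); lra.
Qed.

Lemma locally_lipschitz_opp_reflect F :
  locally_lipschitz F -> locally_lipschitz (fun u => - F (- u)).
Proof.
  intros HF M; destruct (HF M) as [L [HL0 HL]]; exists L; split; [exact HL0|].
  intros u v Hu Hv.
  replace (- F (- u) - - F (- v)) with (- (F (- u) - F (- v))) by ring.
  replace (u - v) with (- (- u - - v)) by ring.
  rewrite !Rabs_Ropp; apply HL; rewrite Rabs_Ropp; assumption.
Qed.

Lemma forcing_le_pos_part (k Mk L c u Fu Fc : R) :
  0 < k <= Mk -> 0 <= L -> Fc <= 0 -> (c <= u -> Fu <= 0) ->
  Rabs (Fu - Fc) <= L * Rabs (u - c) -> k * Fu <= Mk * L * pos_part (c - u).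
Proof.
  intros Hk HL HFc HFu Hlip.
  destruct (Rle_dec c u).
  - assert (0 <= Mk * L * pos_part (c - u)).
    { apply Rmult_le_pos; [apply Rmult_le_pos | apply pos_part_ge0]; lra. }
    pose proof (HFu r); nra.
  - rewrite pos_part_id by lra.
    rewrite (Rabs_left (u - c)) in Hlip by lra; apply Rabs_le_between in Hlip.
    assert (0 <= L * (c - u)) by (apply Rmult_le_pos; lra).
    apply Rle_trans with (k * (L * (c - u))); [apply Rmult_le_compat_l; lra|].
    rewrite Rmult_assoc; apply Rmult_le_compat_r; lra.
Qed.

Section SpowSystem.

Variables (a g s0 s1 : R) (E K F X y : R -> R).
Hypotheses (Ha : 0 <= a) (Hs : s0 <= s1).
Hypothesis HE : forall t, s0 <= t <= s1 -> continuity_pt E t /\ 0 < E t.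
Hypothesis HK : forall t, s0 <= t <= s1 -> continuity_pt K t /\ 0 < K t.
Hypothesis HF : locally_lipschitz F.
Hypothesis Hsys : forall t, s0 <= t <= s1 ->
  is_derive X t (spow (y t) a * E t) /\ is_derive y t (g * y t - K t * F (X t)).

Lemma spow_system_below_between c : (forall u, c <= u -> F u <= 0) ->
  X s0 < c -> X s1 < c -> forall t, s0 < t < s1 -> X t < c.
Proof.
  intros HFc.
  assert (Hs0 : s0 <= s0 <= s1) by lra.
  destruct (continuous_bounded_segment y s0 s1) as [My HMy].
  { intros t Ht; apply (is_derive_continuity_pt _ _ _ (proj2 (Hsys t Ht))). }
  destruct (continuous_bounded_segment X s0 s1) as [MX HMX].
  { intros t Ht; apply (is_derive_continuity_pt _ _ _ (proj1 (Hsys t Ht))). }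
  destruct (continuous_bounded_segment E s0 s1) as [ME HME].
  { intros t Ht; apply HE, Ht. }
  destruct (continuous_bounded_segment K s0 s1) as [MK HMK].
  { intros t Ht; apply HK, Ht. }
  destruct (HF (MX + Rabs c)) as [L [HL0 HL]].
  assert (HMX0 : 0 <= MX) by (pose proof (HMX s0 Hs0); pose proof (Rabs_pos (X s0)); lra).
  assert (HMK0 : 0 <= MK) by (pose proof (HMK s0 Hs0); pose proof (Rabs_pos (K s0)); lra).
  apply (below_level_between X y (fun t => spow (y t) a * E t) (fun t => K t * F (X t))
           g (Rpower My a * ME) (MK * L)).
  - pose proof (HME s0 Hs0); pose proof (Rabs_pos (E s0)).
    apply Rmult_le_pos; [left; apply exp_pos | lra].
  - apply Rmult_le_pos; assumption.
  - exact Hsys.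
  - intros t Ht.
    pose proof (opp_spow_le (y t) a My Ha (HMy t Ht)).
    pose proof (HE t Ht); pose proof (HME t Ht); pose proof (Rle_abs (E t)).
    assert (0 <= Rpower My a * pos_part (- y t)).
    { apply Rmult_le_pos; [left; apply exp_pos | apply pos_part_ge0]. }
    nra.
  - intros t Ht; destruct (HK t Ht) as [_ HKt].
    pose proof (HMK t Ht); pose proof (Rle_abs (K t)); pose proof (HMX t Ht).
    apply (forcing_le_pos_part _ _ _ _ _ _ (F c)); auto using Rle_refl; try lra.
    apply HL; pose proof (Rabs_pos c); pose proof (Rabs_pos (X t)); lra.
  - intros t Ht Hzero; destruct (HE t Ht) as [_ HEt].
    apply (spow_eq0 (y t) a).
    apply Rmult_integral in Hzero as [|]; lra.
Qed.

End SpowSystem.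

Lemma spow_system_between (a g s0 s1 lo hi : R) (E K F X y : R -> R) :
  0 <= a -> s0 <= s1 ->
  (forall t, s0 <= t <= s1 -> continuity_pt E t /\ 0 < E t) ->
  (forall t, s0 <= t <= s1 -> continuity_pt K t /\ 0 < K t) ->
  locally_lipschitz F ->
  (forall u, hi <= u -> F u <= 0) -> (forall u, u <= lo -> 0 <= F u) ->
  (forall t, s0 <= t <= s1 ->
    is_derive X t (spow (y t) a * E t) /\ is_derive y t (g * y t - K t * F (X t))) ->
  lo < X s0 < hi -> lo < X s1 < hi -> forall t, s0 < t < s1 -> lo < X t < hi.
Proof.
  intros Ha Hs HE HK HF Hhi Hlo Hsys H0 H1 t Ht; split.
  - apply Ropp_lt_cancel.
    apply (spow_system_below_between a g s0 s1 E K (fun u => - F (- u))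
             (fun t => - X t) (fun t => - y t)); try lra; auto.
    + apply locally_lipschitz_opp_reflect, HF.
    + intros t' Ht'; destruct (Hsys t' Ht') as [HX Hy].
      rewrite spow_opp, Ropp_involutive; split.
      * replace (- spow (y t') a * E t') with (- (spow (y t') a * E t')) by ring.
        apply (is_derive_opp X), HX.
      * replace (g * - y t' - K t' * - F (X t')) with (- (g * y t' - K t' * F (X t')))
          by ring.
        apply (is_derive_opp y), Hy.
    + intros u Hu; pose proof (Hlo (- u) ltac:(lra)); lra.
  - apply (spow_system_below_between a g s0 s1 E K F X y); tauto.
Qed.

Lemma truncation_sign (F : R -> R) lo hi : lo < 0 < hi ->
  (forall u, u < lo - 1 \/ hi + 1 < u -> F u = 0) ->
  (forall u, (lo - 1 <= u <= lo \/ hi <= u <= hi + 1) -> u * F u <= 0) ->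
  (forall u, hi <= u -> F u <= 0) /\ (forall u, u <= lo -> 0 <= F u).
Proof.
  intros Hlohi Hzero Hsign; split; intros u Hu.
  - destruct (Rle_dec u (hi + 1)).
    + pose proof (Hsign u ltac:(lra)); nra.
    + rewrite Hzero by lra; lra.
  - destruct (Rle_dec (lo - 1) u).
    + pose proof (Hsign u ltac:(lra)); nra.
    + rewrite Hzero by lra; lra.
Qed.

Lemma is_derive_mul_exp_opp (x : R -> R) al v t :
  is_derive x t (al * x t + v) ->
  is_derive (fun t => x t * exp (- al * t)) t (v * exp (- al * t)).
Proof.
  intro Hx.
  replace (v * exp (- al * t))
    with ((al * x t + v) * exp (- al * t) + x t * (- al * exp (- al * t))) by ring.
  apply (is_derive_mult x (fun t => exp (- al * t))); [exact Hx | | intros; apply Rmult_comm].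
  auto_derive; [easy | ring].
Qed.

Lemma continuity_pt_exp_lin m t : continuity_pt (fun t => exp (m * t)) t.
Proof.
  apply (is_derive_continuity_pt _ _ (m * exp (m * t))); auto_derive; [easy | ring].
Qed.

Lemma exp_weighted_continuity_pos (k : R -> R) m t :
  (forall r, 0 < r -> ex_derive k r) -> (forall r, 0 < r -> 0 < k r) ->
  continuity_pt (fun t => k (exp t) * exp (m * t)) t /\ 0 < k (exp t) * exp (m * t).
Proof.
  intros Hk Hkpos; split.
  - apply continuity_pt_mult; [|apply continuity_pt_exp_lin].
    apply (continuity_pt_comp exp k); [apply derivable_continuous_pt, derivable_pt_exp|].
    destruct (Hk (exp t) (exp_pos t)) as [dk Hdk]; exact (is_derive_continuity_pt _ _ _ Hdk).
  - apply Rmult_lt_0_compat; [apply Hkpos|]; apply exp_pos.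
Qed.

Theorem lemma3p5
  (n : nat) (p q delta dm dp : R) (b f k h fbar : R -> R)
  (* n > p > 1, p in (1,2] *)
  (Hnp : p < INR n) (Hp1 : 1 < p) (Hp2 : p <= 2)
  (* hypothesis (F) *)
  (Hq : 2 < q) (Hb : is_C1 b) (Hf : is_C1 f)
  (Hdm : 0 < dm) (Hdp : 0 < dp)
  (Hbpos : forall u, - dm < u < dp -> 0 < b u)
  (Hbdm : b (- dm) = 0) (Hbdp : b dp = 0)
  (HfF : forall u, f u = spow u (q - 2) * b u)
  (* hypothesis (K) *)
  (Hk : is_C1_pos k) (Hdelta : - p < delta)
  (HkK : forall r, 0 < r -> k r = h r * Rpower r delta)
  (Hhpos : forall r, 0 < r -> 0 < h r)
  (Hhder : forall r, 0 < r -> ex_derive h r)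
  (Hh0 : exists L0, 0 < L0 /\ filterlim h (at_right 0) (locally L0))
  (Hhinf : exists Linf, 0 < Linf /\ filterlim h (Rbar_locally p_infty) (locally Linf))
  (Hh'0 : exists M eps, 0 < eps /\ forall r, 0 < r < eps -> Derive h r * r <= M)
  (Hh'inf : exists varpi, 0 < varpi /\
      filterlim (fun r => Derive h r * Rpower r (1 + varpi))
                (Rbar_locally p_infty) (locally 0))
  (* l > np/(n-p) *)
  (Hl : INR n * p / (INR n - p) < l_exp p q delta)
  (* the truncation fbar *)
  (Hfbar : is_C1 fbar)
  (Hfbar_eq : forall u, - dm < u < dp -> fbar u = f u)
  (Hfbar_0 : forall u, u < - dm - 1 \/ dp + 1 < u -> fbar u = 0)
  (Hfbar_sign : forall u, (- dm - 1 <= u <= - dm \/ dp <= u <= dp + 1) -> u * fbar u <= 0)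
  (* the trajectory (x,y) through Q = (Qx,Qy) at time sigma, on [sigma, sigma'] *)
  (Qx Qy sigma sigma' : R) (x y : R -> R)
  (Hss : sigma < sigma')
  (Hx0 : x sigma = Qx) (Hy0 : y sigma = Qy)
  (Hode : forall t, sigma <= t <= sigma' ->
      is_derive x t (alpha_l (l_exp p q delta) p * x t
                     + spow (y t) ((2 - p) / (p - 1)))
      /\ is_derive y t (gamma_l n (l_exp p q delta) p * y t
                     - g_l k fbar (l_exp p q delta) p (x t) t))
  (HQ : - dm < Qx * exp (- alpha_l (l_exp p q delta) p * sigma) < dp)
  (Hs' : - dm < x sigma' * exp (- alpha_l (l_exp p q delta) p * sigma') < dp) :
  forall t, sigma < t < sigma' ->
    - dm < x t * exp (- alpha_l (l_exp p q delta) p * t) < dp.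
Proof.
  set (L := l_exp p q delta) in *; set (al := alpha_l L p) in *.
  destruct (truncation_sign fbar (- dm) dp ltac:(lra) Hfbar_0 Hfbar_sign)
    as [Hfbar_above Hfbar_below].
  assert (Hkpos : forall r, 0 < r -> 0 < k r).
  { intros r Hr; rewrite HkK by exact Hr.
    apply Rmult_lt_0_compat; [apply Hhpos, Hr | apply exp_pos]. }
  apply (spow_system_between ((2 - p) / (p - 1)) (gamma_l n L p) sigma sigma' (- dm) dp
           (fun t => exp (- al * t)) (fun t => k (exp t) * exp (al * (L - 1) * t))
           fbar (fun t => x t * exp (- al * t)) y).
  - apply Rdiv_le_0_compat; lra.
  - lra.
  - intros t _; split; [apply continuity_pt_exp_lin | apply exp_pos].
  - intros t _; apply exp_weighted_continuity_pos; [apply Hk | exact Hkpos].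
  - apply is_C1_locally_lipschitz, Hfbar.
  - exact Hfbar_above.
  - exact Hfbar_below.
  - intros t Ht; destruct (Hode t Ht) as [Hx Hy]; split.
    + apply is_derive_mul_exp_opp, Hx.
    + unfold g_l in Hy; fold al in Hy.
      replace (k (exp t) * exp (al * (L - 1) * t) * fbar (x t * exp (- al * t)))
        with (k (exp t) * fbar (x t * exp (- al * t)) * exp (al * (L - 1) * t)) by ring.
      exact Hy.
  - rewrite Hx0; exact HQ.
  - exact Hs'.
Qed.
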